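(* Let $K$ be a field, let $\mathcal{H}$ be a complete $s$-uniform $t$-partite hypergraph with $2\leq s\leq t$ on vertex set $\{x_1,\ldots,x_n\}$, $R=K[x_1,\ldots,x_n]$, with sides $V_1,\ldots,V_t$ satisfying $|V_1|\leq|V_2|\leq\cdots\leq|V_t|$. Then: (a) the facets of $\mathrm{Ind}(\mathcal{H})$ are exactly the sets $\bigcup_{j=1}^{s-1}V_{i_j}$ for $1\leq i_1<\cdots<i_{s-1}\leq t$; (b) $\mathrm{Tr}(\mathcal{H})=\{\bigcup_{j=1}^{t-s+1}V_{i_j}: 1\leq i_1<\cdots<i_{t-s+1}\leq t\}$; (c) $i(\mathcal{H})=\sum_{i=t-s+2}^{t}|V_i|$ and $\tau(\mathcal{H})=\sum_{i=1}^{t-s+1}|V_i|$; (d) $\dim(R/I(\mathcal{H}))=\dim(\mathrm{Ind}(\mathcal{H}))+1=\sum_{i=t-s+2}^{t}|V_i|$ and $\mathrm{ht}(I(\mathcal{H}))=\sum_{i=1}^{t-s+1}|V_i|$; (e) if $\mathcal{H}$ is $m$-balanced for some $m\geq 1$, then $\mathrm{ht}(I(\mathcal{H}))=m(t-s+1)$ and $\dim(R/I(\mathcal{H}))=m(s-1)$.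
   Context: A complete $s$-uniform $t$-partite hypergraph has vertex set partitioned into nonempty sides $V_1,\ldots,V_t$, and its edges are exactly all $s$-element vertex subsets consisting of one vertex from each of $s$ distinct sides; it is $m$-balanced if $|V_i|=m$ for all $i$. The edge ideal is $I(\mathcal{H})=(\prod_{x\in e}x: e\in\mathcal{H})$. An independent set is a vertex set containing no edge; $\mathrm{Ind}(\mathcal{H})$ is the simplicial complex of independent sets, and $i(\mathcal{H})$ is the maximum size of an independent set. A transversal is a vertex set meeting every edge; $\mathrm{Tr}(\mathcal{H})$ is the set of inclusion-minimal transversals, and $\tau(\mathcal{H})$ is the minimum size of a transversal. *)

From HB Require Import structures.
From mathcomp Require Import all_boot all_order all_algebra.
From mathcomp Require Import mpoly.
Set Implicit Arguments. Unset Strict Implicit. Unset Printing Implicit Defensive.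
Import GRing.Theory.

(* Vertices x_1..x_n are 'I_n; the side of each vertex is given by
   side : 'I_n -> 'I_t (sides indexed 0..t-1 instead of 1..t). *)

Section Hyper.
Variables (n t s : nat) (side : 'I_n -> 'I_t).

Definition Vside (i : 'I_t) : {set 'I_n} := [set x | side x == i].

Definition cHyp : {set {set 'I_n}} :=
  [set e : {set 'I_n} | (#|e| == s) && [forall x in e, forall y in e, (side x == side y) ==> (x == y)]].

Definition union_sides (S : {set 'I_t}) : {set 'I_n} := [set x | side x \in S].
End Hyper.

Section HypGen.
Variable (n : nat) (H : {set {set 'I_n}}).

Definition independent (A : {set 'I_n}) : bool := [forall e in H, ~~ (e \subset A)].
Definition transversal (T : {set 'I_n}) : bool := [forall e in H, e :&: T != set0].

Definition facet_Ind (F : {set 'I_n}) : bool := maxset independent F.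
Definition min_transversal (T : {set 'I_n}) : bool := minset transversal T.

Definition indep_num : nat := \max_(A : {set 'I_n} | independent A) #|A|.
Definition transv_num : nat := \big[minn/n]_(T : {set 'I_n} | transversal T) #|T|.

Definition dim_Ind : int := (indep_num%:Z - 1)%R.
End HypGen.

Section Alg.
Variables (K : fieldType) (n : nat).
Local Notation R := {mpoly K[n]}.
Local Open Scope ring_scope.

Definition is_ideal (P : R -> Prop) : Prop :=
  P 0 /\ (forall x y, P x -> P y -> P (x + y)) /\ (forall a x, P x -> P (a * x)).

Definition is_prime_ideal (P : R -> Prop) : Prop :=
  is_ideal P /\ ~ P 1 /\ (forall x y, P (x * y) -> P x \/ P y).

Definition subI (P Q : R -> Prop) : Prop := forall x, P x -> Q x.
Definition ssubI (P Q : R -> Prop) : Prop := subI P Q /\ ~ subI Q P.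

Definition prime_chain (P : nat -> R -> Prop) (d : nat) : Prop :=
  (forall i, (i <= d)%N -> is_prime_ideal (P i)) /\
  (forall i, (i < d)%N -> ssubI (P i) (P i.+1)).

(* Krull dimension of R/I equals d (primes of R/I <-> primes of R containing I) *)
Definition krull_dim_quot (I : R -> Prop) (d : nat) : Prop :=
  (exists P, prime_chain P d /\ subI I (P 0%N)) /\
  (forall P k, prime_chain P k -> subI I (P 0%N) -> (k <= d)%N).

Definition prime_height (P : R -> Prop) (h : nat) : Prop :=
  (exists Q, prime_chain Q h /\ (forall x, Q h x <-> P x)) /\
  (forall Q k, prime_chain Q k -> (forall x, Q k x <-> P x) -> (k <= h)%N).

Definition ideal_height (I : R -> Prop) (h : nat) : Prop :=
  (exists P, is_prime_ideal P /\ subI I P /\ prime_height P h) /\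
  (forall P h', is_prime_ideal P -> subI I P -> prime_height P h' -> (h <= h')%N).

Definition edge_ideal (H : {set {set 'I_n}}) : R -> Prop :=
  fun p => exists c : {set 'I_n} -> R,
    p = \sum_(e in H) c e * \prod_(i in e) 'X_i.
End Alg.

(* A set of vertices is independent exactly when it meets fewer than s sides,
   so the facets of Ind(H) are the unions of s - 1 sides and, by
   complementation, the minimal transversals are the unions of t - s + 1
   sides; as the sides grow with their index, the largest facet and the
   smallest transversal are made of the last, resp. first, sides.
   For the algebra, let tau be the least size of a transversal.  A prime P
   containing I(H) contains the monomial prime (x_i : x_i \in P), whose
   variables form a transversal, so P tops a chain of length at least tau
   of primes (x_i : i \in T); conversely (x_i : i \in T0) for a minimum
   transversal T0 contains I(H) and extends upwards to a chain of length
   n - tau.  Hence ht I(H) = tau and dim R/I(H) = n - tau = i(H), using that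
   prime chains in K[x_1..x_n] have length at most n: elements separating
   consecutive primes of a chain are algebraically independent, while any
   n + 1 polynomials are dependent by a dimension count. *)

From Pilot Require Import Defs.
From HB Require Import structures.
From mathcomp Require Import all_boot all_order all_algebra.
From mathcomp Require Import mpoly.
From mathcomp Require Import zify.
From Stdlib Require Import Classical ClassicalEpsilon.
Set Implicit Arguments. Unset Strict Implicit. Unset Printing Implicit Defensive.
Import GRing.Theory.
Local Open Scope ring_scope.
Local Notation transversal := Defs.transversal.

Section IdealFacts.
Variables (K : fieldType) (n : nat).
Local Notation R := {mpoly K[n]}.
Implicit Types (Q : R -> Prop) (x y : R).

Lemma ideal_sum Q (I : Type) (r : seq I) (P : pred I) (F : I -> R) :
  is_ideal Q -> (forall i, P i -> Q (F i)) -> Q (\sum_(i <- r | P i) F i).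
Proof.
move=> [Q0 [QD _]] QF; elim: r => [|a r IH]; first by rewrite big_nil.
by rewrite big_cons; case: ifP => // Pa; exact: QD (QF a Pa) IH.
Qed.

Lemma idealMr Q a x : is_ideal Q -> Q x -> Q (x * a).
Proof. by move=> [_ [_ QM]] Qx; rewrite mulrC; apply: QM. Qed.

Lemma idealZ Q (c : K) x : is_ideal Q -> Q x -> Q (c *: x).
Proof. by move=> [_ [_ QM]] Qx; rewrite -mul_mpolyC; apply: QM. Qed.

Lemma idealB Q x y : is_ideal Q -> Q x -> Q y -> Q (x - y).
Proof. by move=> [_ [QD QM]] Qx Qy; apply: QD => //; rewrite -mulN1r; apply: QM. Qed.

Lemma ideal_mpolyX Q (m : 'X_{1..n}) i :
  is_ideal Q -> Q 'X_i -> (0 < m i)%N -> Q 'X_[m].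
Proof.
move=> QI QX mi; rewrite -[X in Q X]comp_mpoly_id comp_mpolyX (bigD1 i) //=.
apply: idealMr => //; rewrite tnth_mktuple; case: (m i) mi => // k _.
by rewrite exprS; apply: idealMr.
Qed.

Lemma prime_ideal_exp Q x e : is_prime_ideal Q -> Q (x ^+ e) -> Q x.
Proof.
move=> [_ [Q1 QM]]; elim: e => [|e IH]; first by rewrite expr0 => /Q1.
by rewrite exprS => /QM [].
Qed.

Lemma prime_ideal_prod Q (I : finType) (A : {pred I}) (F : I -> R) :
  is_prime_ideal Q -> Q (\prod_(i in A) F i) -> exists2 i, i \in A & Q (F i).
Proof.
move=> [_ [Q1 QM]]; elim/big_rec: _ => [//|i x iA IH /QM[QF|/IH//]].
by exists i.
Qed.

End IdealFacts.

(* [var_ideal T] is the ideal (x_i : i \in T), presented as the kernel of the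
   substitution x_i |-> 0 (i \in T): this makes it prime at once. *)
Section VarIdeal.
Variables (K : fieldType) (n : nat).
Local Notation R := {mpoly K[n]}.
Implicit Types (Q : R -> Prop) (T : {set 'I_n}).

Definition kill_vars T : n.-tuple R := [tuple if i \in T then 0 else 'X_i | i < n].

Definition var_ideal T : R -> Prop := fun p => p \mPo kill_vars T = 0.

Lemma var_ideal_prime T : is_prime_ideal (var_ideal T).
Proof.
rewrite /var_ideal; split; [split; [|split]|split].
- by rewrite comp_mpoly0.
- by move=> x y hx hy; rewrite comp_mpolyD hx hy addr0.
- by move=> a x hx; rewrite rmorphM /= hx mulr0.
- by rewrite comp_mpoly1; apply/eqP; rewrite oner_eq0.
- by move=> x y; rewrite rmorphM /= => /eqP; rewrite mulf_eq0 => /orP[] /eqP; auto.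
Qed.

Lemma var_idealX T i : var_ideal T 'X_i <-> i \in T.
Proof.
rewrite /var_ideal comp_mpolyXU -tnth_nth tnth_mktuple.
case: (i \in T) => //; split=> // X0.
by have := mcoeffXU K i i; rewrite X0 mcoeff0 eqxx => /esym/eqP; rewrite oner_eq0.
Qed.

Lemma var_ideal_min T Q : is_ideal Q ->
  (forall i, i \in T -> Q 'X_i) -> subI (var_ideal T) Q.
Proof.
move=> QI QX p Tp.
have -> : p = p - (p \mPo kill_vars T) by rewrite Tp subr0.
rewrite {1}(mpolyE p) comp_mpolyEX -sumrB.
apply: ideal_sum => // m _; rewrite -scalerBr; apply: idealZ => //.
have [/existsP[i /andP[iT mi]]|] := boolP [exists i, (i \in T) && (0 < m i)%N].
  rewrite comp_mpolyX (bigD1 i) //= tnth_mktuple iT expr0n.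
  rewrite (negbTE (lt0n_neq0 mi)) mul0r subr0.
  exact: ideal_mpolyX (QX i iT) mi.
rewrite negb_exists => /forallP m0.
rewrite comp_mpolyX -[X in X - _]comp_mpoly_id comp_mpolyX.
rewrite (eq_bigr (fun i => tnth (kill_vars T) i ^+ m i)); first by rewrite subrr; case: QI.
move=> i _; rewrite !tnth_mktuple; case: ifP => // iT.
by move: (m0 i); rewrite iT /= lt0n negbK => /eqP->; rewrite !expr0.
Qed.

Lemma var_idealS T T' : T \subset T' -> subI (var_ideal T) (var_ideal T').
Proof.
move=> TT'; apply: var_ideal_min; first exact: (var_ideal_prime T').1.
by move=> i iT; apply/var_idealX; apply: (subsetP TT').
Qed.

End VarIdeal.

Definition ffcons D k (a : 'I_D) (b : {ffun 'I_k -> 'I_D}) : {ffun 'I_k.+1 -> 'I_D} :=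
  [ffun j => if unlift ord0 j is Some j' then b j' else a].

Lemma ffcons_eta D k (al : {ffun 'I_k.+1 -> 'I_D}) :
  ffcons (al ord0) [ffun j => al (lift ord0 j)] = al.
Proof.
apply/ffunP=> j; rewrite ffunE.
by case: (unliftP ord0 j) => [j' ->|->]; rewrite ?ffunE.
Qed.

Lemma sum_ffcons (V : nmodType) D k (F : {ffun 'I_k.+1 -> 'I_D} -> V) :
  \sum_al F al = \sum_(a : 'I_D) \sum_(b : {ffun 'I_k -> 'I_D}) F (ffcons a b).
Proof.
rewrite pair_big /= (reindex (fun p => ffcons p.1 p.2)) //=.
exists (fun al => (al ord0, [ffun j => al (lift ord0 j)])) => [[a b] _|al _].
  rewrite /= /ffcons ffunE unlift_none; congr pair.
  by apply/ffunP=> j; rewrite !ffunE liftK.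
exact: ffcons_eta.
Qed.

Lemma sum_expr_factor (R : comPzRingType) (y : R) D (S : 'I_D -> R) (a0 : 'I_D) :
  (forall a : 'I_D, (a < a0)%N -> S a = 0) ->
  exists W, \sum_(a : 'I_D) y ^+ a * S a = y ^+ a0 * (S a0 + y * W).
Proof.
move=> S0; exists (\sum_(a : 'I_D | (a0 < a)%N) y ^+ (a - a0.+1) * S a).
rewrite (bigID (fun a : 'I_D => (a < a0)%N)) /= big1 ?add0r; last first.
  by move=> a /S0 ->; rewrite mulr0.
rewrite (bigD1 a0) /= ?ltnn // mulrDr; congr (_ + _).
rewrite !mulr_sumr; apply: eq_big => [a|a /andP[a0a ne]].
  by rewrite -leqNgt ltn_neqAle eq_sym andbC.
by rewrite mulrA -exprSr mulrA -exprD subnKC // ltn_neqAle eq_sym ne leqNgt.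
Qed.

Section ChainLength.
Variables (K : fieldType) (n : nat).
Local Notation R := {mpoly K[n]}.

Definition monom (x : nat -> R) k D (al : {ffun 'I_k -> 'I_D}) : R :=
  \prod_(j < k) x j ^+ al j.

Definition monom_comb k D (x : nat -> R) (v : {ffun 'I_k -> 'I_D} -> K) : R :=
  \sum_al v al *: monom x al.

Lemma monom_comb_recl k D (x : nat -> R) (v : {ffun 'I_k.+1 -> 'I_D} -> K) :
  monom_comb x v =
  \sum_(a : 'I_D) x 0%N ^+ a * monom_comb (fun j => x j.+1) (fun b => v (ffcons a b)).
Proof.
rewrite /monom_comb sum_ffcons; apply: eq_bigr => a _; rewrite mulr_sumr.
apply: eq_bigr => b _; rewrite /monom big_ord_recl ffunE unlift_none -scalerAr.
by congr (_ *: (_ * _)); apply: eq_bigr => j _; rewrite ffunE liftK lift0.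
Qed.

(* Elements separating consecutive primes of a chain satisfy no nontrivial
   polynomial relation modulo the bottom prime: strip the least power of
   [x 0] and push the remaining relation one step up the chain. *)
Lemma monom_comb_notin_chain k D (P : nat -> R -> Prop) (x : nat -> R)
    (v : {ffun 'I_k -> 'I_D} -> K) :
  (forall i, (i <= k)%N -> is_prime_ideal (P i)) ->
  (forall i, (i < k)%N -> subI (P i) (P i.+1)) ->
  (forall i, (i < k)%N -> P i.+1 (x i) /\ ~ P i (x i)) ->
  (exists al, v al != 0) -> ~ P 0%N (monom_comb x v).
Proof.
elim: k P x v => [|k IH] P x v Pprime Pinc Psep [al val].
  have [P0 [P01 _]] := Pprime 0%N isT.
  have al_uniq b : b = al by apply/ffunP => -[].
  rewrite /monom_comb (big_pred1 al); last by move=> b; rewrite /= [b]al_uniq eqxx.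
  rewrite /monom big_ord0 => /(idealZ (v al)^-1 P0).
  by rewrite scalerA mulVf // scale1r.
pose S a := monom_comb (fun j => x j.+1) (fun b => v (ffcons a b)).
have [x_in1 x_notin0] := Psep 0%N isT; have P0prime := Pprime 0%N isT.
pose nonzero_row a := [exists b, v (ffcons a b) != 0].
have nz_al0 : nonzero_row (al ord0).
  by apply/existsP; exists [ffun j => al (lift ord0 j)]; rewrite ffcons_eta.
have [a0 /existsP[b0 vb0] a0_min] := arg_minnP (fun a : 'I_D => a : nat) nz_al0.
have [|W factor] := @sum_expr_factor _ (x 0%N) D S a0.
  move=> a lta; rewrite /S /monom_comb big1 // => b _.
  have [->|vb] := eqVneq (v (ffcons a b)) 0; first by rewrite scale0r.
  suff /a0_min : nonzero_row a by rewrite leqNgt lta.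
  by apply/existsP; exists b.
rewrite monom_comb_recl -/S factor.
move=> /P0prime.2.2[/(prime_ideal_exp P0prime)/x_notin0 //|SW].
have P1 := (Pprime 1%N isT).1.
have S1 : P 1%N (S a0).
  have := idealB P1 (Pinc 0%N isT _ SW) (idealMr W P1 x_in1).
  by rewrite addrK.
apply: (IH (fun i => P i.+1) (fun i => x i.+1)) S1 => [i ik|i ik|i ik|].
- exact: (Pprime i.+1 ik).
- exact: (Pinc i.+1 ik).
- exact: (Psep i.+1 ik).
- by exists b0.
Qed.

Lemma exists_relation_msize (A : finType) (f : A -> R) E :
  (forall a, msize (f a) <= E.+1)%N -> (E.+1 ^ n < #|A|)%N ->
  exists2 v : A -> K, (exists a, v a != 0) & \sum_a v a *: f a = 0.
Proof.
move=> fE cardA.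
pose B := {ffun 'I_n -> 'I_E.+1}.
pose mn (be : B) : 'X_{1..n} := [multinom (be i : nat) | i < n].
pose M : 'M[K]_(#|A|, #|B|) := \matrix_(r, c) (f (enum_val r))@_(mn (enum_val c)).
have /rowV0Pn [w /sub_kermxP wM nz_w] : kermx M != 0.
  rewrite -mxrank_eq0 mxrank_ker subn_eq0 -ltnNge.
  by apply: leq_ltn_trans (rank_leq_col M) _; rewrite card_ffun !card_ord.
exists (fun a => w 0 (enum_rank a)).
  have /existsP[j wj] : [exists j, w 0 j != 0].
    apply: contraR nz_w; rewrite negb_exists => /forallP w0.
    by apply/eqP/rowP => j; rewrite mxE; apply/eqP/negPn.
  by exists (enum_val j); rewrite enum_valK.
apply/mpolyP => m; rewrite mcoeff0 raddf_sum /=.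
under eq_bigr do rewrite mcoeffZ.
have [/forallP mE|] := boolP [forall j, (m j < E.+1)%N].
  pose be : B := [ffun j => inord (m j)].
  have mn_be : mn be = m by apply/mnmP => j; rewrite mnmE ffunE inordK.
  have := congr1 (fun u : 'rV_#|B| => u 0 (enum_rank be)) wM; rewrite /= !mxE.
  rewrite (reindex _ (onW_bij _ (@enum_rank_bij A))) /=.
  by under eq_bigr do rewrite mxE !enum_rankK mn_be.
rewrite negb_forall => /existsP[j]; rewrite -leqNgt => Emj.
rewrite big1 // => a _; rewrite memN_msupp_eq0 ?mulr0 //; apply: msize_mdeg_ge.
apply: leq_trans (fE a) (leq_trans Emj _).
by rewrite mdegE (bigD1 j) //= leq_addr.
Qed.

Lemma msizeM_leS (p q : R) a b : (msize p <= a.+1)%N -> (msize q <= b.+1)%N ->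
  (msize (p * q) <= (a + b).+1)%N.
Proof.
have [->|nzp] := eqVneq p 0; first by rewrite mul0r msize0.
have [->|nzq] := eqVneq q 0; first by rewrite mulr0 msize0.
rewrite msizeM // => pa qb; have := leq_add pa qb; rewrite addSn addnS.
by case: (msize p + msize q)%N.
Qed.

Lemma msize_monom (x : nat -> R) k D (al : {ffun 'I_k -> 'I_D}) d :
  (forall j : 'I_k, msize (x j) <= d.+1)%N -> (msize (monom x al) <= (k * D * d).+1)%N.
Proof.
move=> xd; apply: (@leq_trans (\sum_(j < k) al j * d).+1); last first.
  rewrite ltnS -mulnA -[X in (_ <= X * _)%N]card_ord -sum_nat_const.
  by apply: leq_sum => j _; rewrite leq_mul2r ltnW ?orbT.
rewrite /monom; elim/big_rec2: _ => [|j e p _ pe]; first by rewrite msize1.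
rewrite addnC mulrC; apply: msizeM_leS pe _.
elim: (al j : nat) => [|i IH]; first by rewrite expr0 msize1.
by rewrite exprS mulSn; apply: msizeM_leS.
Qed.

(* The D ^ n.+1 monomials with exponents < D in the [x j] have degree at most
   E := n.+1 * D * d, hence live in a space of dimension at most E.+1 ^ n,
   and E.+1 ^ n <= (c * D) ^ n < D ^ n.+1 for c := (n.+1 * d).+1, D := c ^ n + 1. *)
Lemma exists_monom_relation (x : nat -> R) : exists D,
  exists2 v : {ffun 'I_n.+1 -> 'I_D} -> K, (exists al, v al != 0) & monom_comb x v = 0.
Proof.
pose d := (\max_(j < n.+1) msize (x j))%N.
pose c := (n.+1 * d).+1; pose D := (c ^ n).+1.
have xd (j : 'I_n.+1) : (msize (x j) <= d.+1)%N.
  by apply: leq_trans (leqnSn _); exact: (@leq_bigmax _ (fun j : 'I_n.+1 => msize (x j)) j).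
exists D; apply: (exists_relation_msize (E := n.+1 * D * d)) => [al|].
  exact: msize_monom.
rewrite card_ffun !card_ord; apply: (@leq_ltn_trans ((c * D) ^ n)).
  have leq_exp2r_any a b e : (a <= b)%N -> (a ^ e <= b ^ e)%N.
    by move=> ab; elim: e => // e IH; rewrite !expnS leq_mul.
  by apply: leq_exp2r_any; rewrite /c /D; nia.
by rewrite expnMn expnS ltn_pmul2r ?expn_gt0.
Qed.

Lemma prime_chain_length_le (P : nat -> R -> Prop) k : prime_chain P k -> (k <= n)%N.
Proof.
move=> [Pprime Pinc]; rewrite leqNgt; apply/negP => nk.
have sep i : exists y : R, (i < k)%N -> P i.+1 y /\ ~ P i y.
  have [ik|] := ltnP i k; last by exists 0.
  have [Pinc_i Pnot] := Pinc i ik.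
  apply: NNPP => nosep; apply: Pnot => y Py; apply: NNPP => Py'.
  by apply: nosep; exists y.
have [x xsep] : exists x : nat -> R, forall i, (i < k)%N -> P i.+1 (x i) /\ ~ P i (x i).
  exists (fun i => proj1_sig (constructive_indefinite_description _ (sep i))) => i.
  exact: proj2_sig (constructive_indefinite_description _ (sep i)).
have [D [v nz_v rel]] := exists_monom_relation x.
apply: (@monom_comb_notin_chain n.+1 D P x v) => [i ni|i ni|i ni||].
- exact: Pprime (leq_trans ni nk).
- exact: (Pinc i (leq_trans ni nk)).1.
- exact: xsep (leq_trans ni nk).
- exact: nz_v.
- by rewrite rel; case: (Pprime 0%N isT) => -[].
Qed.

End ChainLength.

Section PrimeChains.
Variables (K : fieldType) (n : nat).
Local Notation R := {mpoly K[n]}.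
Local Notation var_ideal := (@var_ideal K n).

Lemma var_ideal_chain (T T' : {set 'I_n}) : T \subset T' ->
  exists C, [/\ prime_chain C (#|T'| - #|T|), C 0%N = var_ideal T &
                C (#|T'| - #|T|)%N = var_ideal T'].
Proof.
move=> TT'; pose L := enum (T' :\: T).
have sizeL : size L = (#|T'| - #|T|)%N by rewrite -cardE cardsDS.
exists (fun j => var_ideal (T :|: [set x in take j L])); split; last 2 first.
- by rewrite take0 set_nil setU0.
- rewrite -sizeL take_size set_enum; congr var_ideal; apply/setP => x.
  by rewrite !inE; case: (boolP (x \in T)) => // /(subsetP TT') ->.
rewrite -sizeL; split=> [i _|j lt_jL]; first exact: var_ideal_prime.
have x0 : 'I_n by case: (L) lt_jL => // y0.
have takeS := take_nth x0 lt_jL.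
split.
  apply: var_idealS; apply/subsetP => y; rewrite !inE takeS mem_rcons inE.
  by case/orP=> -> //; rewrite !orbT.
move/(_ 'X_(nth x0 L j)); rewrite !var_idealX !inE takeS mem_rcons inE eqxx orbT.
case/(_ isT)/orP.
  by have := mem_nth x0 lt_jL; rewrite mem_enum inE => /andP[/negPf ->].
have : uniq (take j.+1 L) by rewrite take_uniq ?enum_uniq.
by rewrite takeS rcons_uniq => /andP[/negP].
Qed.

(* [A a] is dropped: [A a.-1] already sits strictly below [B 0]. *)
Lemma prime_chain_cat (A B : nat -> R -> Prop) a b :
  prime_chain A a -> prime_chain B b -> subI (A a) (B 0%N) ->
  exists2 C, prime_chain C (a + b) & C (a + b)%N = B b.
Proof.
move=> [Aprime Ainc] [Bprime Binc] AB.
exists (fun j => if (j < a)%N then A j else B (j - a)%N); last first.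
  by rewrite ltnNge leq_addr /= addKn.
split=> [i ile|i ilt] /=.
  by case: ifP => [/ltnW|_]; [exact: Aprime | apply: Bprime; rewrite leq_subLR].
case: (ltngtP i.+1 a) => [lt_ia|gt_ia|eq_ia].
- exact: Ainc (ltnW lt_ia).
- by rewrite subSn //; apply: Binc; lia.
- have [Asub Anot] : ssubI (A i) (A a) by rewrite -eq_ia; apply: Ainc; rewrite eq_ia.
  rewrite eq_ia subnn.
  split=> [y /Asub /AB //|BA]; apply: Anot => y /AB /BA //.
Qed.

End PrimeChains.

Section EdgeIdeal.
Variables (K : fieldType) (n : nat) (H : {set {set 'I_n}}).
Local Notation R := {mpoly K[n]}.
Local Notation I := (@edge_ideal K n H).
Local Notation var_ideal := (@var_ideal K n).

Lemma edge_ideal_edge e : e \in H -> I (\prod_(i in e) 'X_i).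
Proof.
move=> eH; exists (fun e' => (e' == e)%:R).
rewrite [RHS](bigD1 e) //= eqxx mul1r [X in _ + X]big1 ?addr0 //.
by move=> e' /andP[_ /negPf ->]; rewrite mul0r.
Qed.

Lemma edge_ideal_sub_var_ideal T : transversal H T -> subI I (var_ideal T).
Proof.
move=> /forall_inP HT p [c ->]; have TI := (var_ideal_prime K T).1.
apply: ideal_sum => // e eH; apply: TI.2.2.
have /set0Pn [i] := HT e eH; rewrite inE => /andP[ie iT].
by rewrite (bigD1 i) //=; apply: idealMr TI _; apply/var_idealX.
Qed.

Definition vars_in (P : R -> Prop) : {set 'I_n} :=
  [set i | is_left (excluded_middle_informative (P 'X_i))].

Lemma mem_vars_in P i : i \in vars_in P <-> P 'X_i.
Proof. by rewrite inE; case: excluded_middle_informative. Qed.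

Lemma vars_in_transversal P : is_prime_ideal P -> subI I P -> transversal H (vars_in P).
Proof.
move=> Pprime IP; apply/forall_inP => e eH.
have [i ie Pi] := prime_ideal_prod Pprime (IP _ (edge_ideal_edge eH)).
by apply/set0Pn; exists i; rewrite inE ie; apply/mem_vars_in.
Qed.

Lemma var_ideal_vars_in P : is_prime_ideal P -> subI (var_ideal (vars_in P)) P.
Proof. by move=> Pprime; apply: var_ideal_min => [|i /mem_vars_in //]; exact: Pprime.1. Qed.

Section MinTransversal.
Variable T0 : {set 'I_n}.
Hypothesis T0_transversal : transversal H T0.
Hypothesis T0_min : forall T, transversal H T -> (#|T0| <= #|T|)%N.

Lemma prime_chain_over_edge_ideal P k : prime_chain P k -> subI I (P 0%N) ->
  exists2 c, (#|T0| + k <= c)%N & exists2 C, prime_chain C c & C c = P k.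
Proof.
move=> Pchain IP; pose T := vars_in (P 0%N).
have [C0 [C0chain _ C0end]] := var_ideal_chain K (sub0set T).
rewrite cards0 subn0 in C0chain C0end.
have [|C Cchain Cend] := prime_chain_cat C0chain Pchain.
  by rewrite C0end; apply: var_ideal_vars_in; exact: Pchain.1.
exists (#|T| + k)%N; last by exists C.
by rewrite leq_add2r T0_min // vars_in_transversal //; exact: Pchain.1.
Qed.

Lemma krull_dim_quot_edge_ideal : krull_dim_quot I (n - #|T0|).
Proof.
split=> [|P k Pchain IP].
  have [C [Cchain C0 _]] := var_ideal_chain K (subsetT T0).
  rewrite cardsT card_ord in Cchain.
  by exists C; split=> //; rewrite C0; exact: edge_ideal_sub_var_ideal.
have [c le_c [C Cchain _]] := prime_chain_over_edge_ideal Pchain IP.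
by have := prime_chain_length_le Cchain; lia.
Qed.

Lemma ideal_height_edge_ideal : ideal_height I #|T0|.
Proof.
split=> [|P h Pprime IP Ph].
  exists (var_ideal T0); split; first exact: var_ideal_prime.
  split; first exact: edge_ideal_sub_var_ideal.
  split=> [|Q k Qchain QT0].
    have [C [Cchain _ Cend]] := var_ideal_chain K (sub0set T0).
    rewrite cards0 subn0 in Cchain Cend.
    by exists C; split=> // x; rewrite Cend.
  have [C [Cchain CT0 _]] := var_ideal_chain K (subsetT T0).
  have [|C' C'chain _] := prime_chain_cat Qchain Cchain.
    by move=> x /QT0; rewrite CT0.
  have := prime_chain_length_le C'chain; have := max_card (mem T0).
  by rewrite cardsT !card_ord; lia.
have Pchain : prime_chain (fun=> P) 0 by split=> // i; rewrite ltn0.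
have [c le_c [C Cchain Cend]] := prime_chain_over_edge_ideal Pchain IP.
rewrite addn0 in le_c; apply: leq_trans le_c (Ph.2 C c Cchain _) => x.
by rewrite Cend.
Qed.

End MinTransversal.
End EdgeIdeal.

Local Close Scope ring_scope.

Section TopIndices.
Variable t : nat.

Lemma card_top k : (k <= t)%N -> #|[set i : 'I_t | (t - k <= i)%N]| = k.
Proof.
move=> kt; rewrite -sum1_card -[RHS](subKn kt) -[RHS]muln1 -sum_nat_const_nat.
by rewrite big_geq_mkord; apply: eq_bigl => i; rewrite inE.
Qed.

Lemma leq_sum_top (w : 'I_t -> nat) k (S : {set 'I_t}) :
  {homo w : i j / (i <= j)%N >-> (i <= j)%N} -> #|S| = k -> (k <= t)%N ->
  (\sum_(i in S) w i <= \sum_(i < t | (t - k <= i)%N) w i)%N.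
Proof.
move=> w_mono cardS kt; pose Top := [set i : 'I_t | (t - k <= i)%N].
rewrite [X in (_ <= X)%N](eq_bigl (mem Top)) => [|i]; last by rewrite /= inE.
rewrite (bigID (mem Top)) [X in (_ <= X)%N](bigID (mem S)) /=.
apply: leq_add.
  by rewrite (eq_bigl (fun i => (i \in Top) && (i \in S))) // => i; rewrite andbC.
rewrite (eq_bigl (mem (S :\: Top))) => [|i]; last by rewrite !inE andbC.
rewrite [X in (_ <= X)%N](eq_bigl (mem (Top :\: S))) => [|i]; last by rewrite !inE andbC.
have cardD : #|S :\: Top| = #|Top :\: S| by rewrite !cardsD setIC cardS card_top.
apply: (@leq_trans (#|S :\: Top| * \max_(i in S :\: Top) w i)).
  by rewrite -sum_nat_const; apply: leq_sum => i iST; exact: leq_bigmax_cond.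
rewrite cardD -sum_nat_const; apply: leq_sum => j; rewrite !inE => /andP[_ jTop].
apply/bigmax_leqP => i; rewrite !inE => /andP[iTop _]; apply: w_mono.
by apply: ltnW; apply: leq_trans jTop; rewrite ltnNge.
Qed.

End TopIndices.

Section Transversals.
Variables (n : nat) (H : {set {set 'I_n}}).

Lemma transversalE T : transversal H T = independent H (~: T).
Proof.
by apply/forall_inP/forall_inP => HT e /HT; rewrite setI_eq0 disjoints_subset.
Qed.

Lemma min_transversal_facetC T : min_transversal H T = facet_Ind H (~: T).
Proof.
rewrite /min_transversal minmaxset /facet_Ind; apply: maxset_eq => B /=.
by rewrite transversalE setCK.
Qed.

End Transversals.

Section CompleteHypergraph.
Variables (n t s : nat) (side : 'I_n -> 'I_t).
Local Notation H := (cHyp s side).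
Local Notation us := (union_sides side).
Implicit Types (A F : {set 'I_n}) (S : {set 'I_t}).

(* The edge keeps, in each of the first [s] sides met by [A], the vertex of
   [A] that [pick] chooses for that side. *)
Lemma cHyp_subset A : (s <= #|side @: A|)%N -> exists2 e, e \in H & e \subset A.
Proof.
move=> sA; pose S := [set i in take s (enum (side @: A))].
have cardS : #|S| = s.
  by rewrite cardsE (card_uniqP _) ?take_uniq ?enum_uniq // size_takel // -cardE.
have SA : S \subset side @: A.
  by apply/subsetP => i; rewrite inE => /mem_take; rewrite mem_enum.
pose rep x := [pick y in A | side y == side x].
pose e := [set x in A | (side x \in S) && (rep x == Some x)].
have side_inj : {in e &, injective side}.
  move=> x y; rewrite !inE => /and3P[_ _ /eqP rx] /and3P[_ _ /eqP ry] sxy.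
  by apply: Some_inj; rewrite -rx -ry /rep sxy.
have side_e : side @: e = S.
  apply/setP => i; apply/imsetP/idP => [[x]|iS].
    by rewrite inE => /and3P[_ xS _] ->.
  have /imsetP[x xA i_eq] := subsetP SA i iS; rewrite i_eq in iS *.
  have : rep x != None by rewrite /rep; case: pickP => // /(_ x); rewrite xA eqxx.
  case rx: (rep x) => [y|] // _.
  have /andP[yA /eqP syx] : (y \in A) && (side y == side x).
    by move: rx; rewrite /rep; case: pickP => // z zP [<-].
  have ry : rep y = Some y by rewrite /rep syx; exact: rx.
  by exists y; rewrite // inE yA syx iS ry eqxx.
exists e; last by apply/subsetP => x; rewrite inE => /andP[].
rewrite inE -cardS -side_e card_in_imset // eqxx /=.
apply/forall_inP => x xe; apply/forall_inP => y ye; apply/implyP => /eqP sxy.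
by rewrite (side_inj x y xe ye sxy).
Qed.

Lemma independent_cHyp A : independent H A = (#|side @: A| < s)%N.
Proof.
apply/idP/idP => [indA|sA].
  rewrite ltnNge; apply/negP => /cHyp_subset[e eH eA].
  by move/forall_inP: indA => /(_ e eH); rewrite eA.
apply/forall_inP => e; rewrite inE => /andP[/eqP cardE inj]; apply/negP => eA.
have side_inj : {in e &, injective side}.
  move=> x y xe ye sxy; move/forall_inP: inj => /(_ x xe) /forall_inP /(_ y ye).
  by rewrite sxy eqxx => /eqP.
move: sA; rewrite ltnNge -cardE -(card_in_imset side_inj) => /negP; apply.
by apply: subset_leq_card; apply: imsetS.
Qed.

Lemma union_sidesC S : us (~: S) = ~: us S.
Proof. by apply/setP => x; rewrite !inE. Qed.

Lemma card_union_sides S : #|us S| = (\sum_(i in S) #|Vside side i|)%N.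
Proof.
rewrite -sum1_card (partition_big side (mem S)) => [|x]; last by rewrite inE.
apply: eq_bigr => i iS; rewrite -sum1_card; apply: eq_bigl => x.
by rewrite !inE; case: eqP => [->|]; rewrite ?iS ?andbF ?andbT.
Qed.

Hypotheses (s_ge2 : (2 <= s)%N) (s_le_t : (s <= t)%N).
Hypothesis side_surj : forall i : 'I_t, exists x : 'I_n, side x = i.

Lemma imset_side_union_sides S : side @: us S = S.
Proof.
apply/setP => i; apply/imsetP/idP => [[x]|iS]; first by rewrite inE => Sx ->.
by have [x xi] := side_surj i; exists x; rewrite // inE xi.
Qed.

Lemma independent_union_sides S : independent H (us S) = (#|S| < s)%N.
Proof. by rewrite independent_cHyp imset_side_union_sides. Qed.

Lemma facet_Ind_cHyp F :
  facet_Ind H F <-> exists S : {set 'I_t}, #|S| = (s - 1)%N /\ F = us S.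
Proof.
split=> [/maxsetP[indF Fmax]|[S [cardS ->]]]; last first.
  apply/maxsetP; split=> [|B indB sub_B].
    by rewrite independent_union_sides cardS; lia.
  have side_B : side @: B = S.
    apply/eqP; rewrite eq_sym eqEcard -{1}(imset_side_union_sides S) imsetS //=.
    move: indB; rewrite independent_cHyp cardS subn1 => lt_s.
    by rewrite -ltnS (ltn_predK lt_s).
  apply/eqP; rewrite eqEsubset sub_B andbT.
  by apply/subsetP => x xB; rewrite inE -side_B imset_f.
pose S := side @: F.
have ltS : (#|S| < s)%N by rewrite -independent_cHyp.
have FS : us S = F.
  apply: Fmax; rewrite ?independent_union_sides //.
  by apply/subsetP => x xF; rewrite inE imset_f.
clearbody S; exists S; split=> //; apply/eqP; rewrite eqn_leq; apply/andP; split.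
  by rewrite subn1 -ltnS (ltn_predK ltS).
rewrite leqNgt; apply/negP => lt_S.
have [j jS] : exists j, j \notin S.
  apply/existsP; rewrite -negb_forall; apply: contraTN ltS => /forallP allS.
  have -> : S = setT by apply/setP => i; rewrite inE allS.
  by rewrite cardsT card_ord -leqNgt.
have : F \subset us (j |: S).
  by rewrite -FS; apply/subsetP => x; rewrite !inE => ->; rewrite orbT.
have lt_jS : (#|j |: S| < s)%N by rewrite cardsU1 jS add1n -ltn_predRL -subn1.
move/Fmax; rewrite independent_union_sides lt_jS -FS => /(_ isT) us_eq.
have := imset_side_union_sides (j |: S); rewrite us_eq imset_side_union_sides => eqS.
by move: jS; rewrite eqS setU11.
Qed.

End CompleteHypergraph.

Lemma geq_bigmin_cond (I : finType) (P : pred I) (F : I -> nat) d i :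
  P i -> (\big[minn/d]_(j | P j) F j <= F i)%N.
Proof.
move=> Pi; have : i \in index_enum I by rewrite mem_index_enum.
elim: (index_enum I) => [//|a r IH]; rewrite inE big_cons.
case/orP => [/eqP<-|ir]; first by rewrite Pi geq_minl.
by case: (P a); [exact: leq_trans (geq_minr _ _) (IH ir) | exact: IH].
Qed.

Section SortedSides.
Variables (n t s : nat) (side : 'I_n -> 'I_t).
Hypotheses (s_ge2 : (2 <= s)%N) (s_le_t : (s <= t)%N).
Hypothesis side_surj : forall i : 'I_t, exists x : 'I_n, side x = i.
Local Notation H := (cHyp s side).
Local Notation us := (union_sides side).

Let top := (\sum_(i < t | (t - s + 1 <= i)%N) #|Vside side i|)%N.
Let bot := (\sum_(i < t | (i < t - s + 1)%N) #|Vside side i|)%N.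
Let Top := [set i : 'I_t | (t - s + 1 <= i)%N].

Lemma card_Top : #|Top| = (s - 1)%N.
Proof. by rewrite /Top (_ : t - s + 1 = t - (s - 1))%N ?card_top; lia. Qed.

Lemma card_Bot : #|~: Top| = (t - s + 1)%N.
Proof. by have := cardsC Top; rewrite card_ord card_Top; lia. Qed.

Lemma card_top_sides : #|us Top| = top.
Proof. by rewrite card_union_sides; apply: eq_bigl => i; rewrite inE. Qed.

Lemma card_bot_sides : #|us (~: Top)| = bot.
Proof. by rewrite card_union_sides; apply: eq_bigl => i; rewrite !inE -ltnNge. Qed.

Lemma top_add_bot : (top + bot)%N = n.
Proof. by rewrite -card_top_sides -card_bot_sides union_sidesC cardsC card_ord. Qed.

Lemma transversal_bot_sides : transversal H (us (~: Top)).
Proof.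
by rewrite transversalE -union_sidesC setCK independent_union_sides // card_Top; lia.
Qed.

Lemma balanced_side_sums m : (forall i, #|Vside side i| = m) ->
  top = (m * (s - 1))%N /\ bot = (m * (t - s + 1))%N.
Proof.
move=> Vm; rewrite -card_top_sides -card_bot_sides !card_union_sides.
by split; rewrite (eq_bigr _ (fun i _ => Vm i)) sum_nat_const ?card_Top ?card_Bot mulnC.
Qed.

Lemma min_transversal_cHyp T :
  min_transversal H T <-> exists S : {set 'I_t}, #|S| = (t - s + 1)%N /\ T = us S.
Proof.
rewrite min_transversal_facetC facet_Ind_cHyp //.
split=> [[S [cardS TC]]|[S [cardS ->]]]; exists (~: S).
  by rewrite union_sidesC -TC setCK cardsCs setCK card_ord cardS; split=> //; lia.
by rewrite union_sidesC cardsCs setCK card_ord cardS; split=> //; lia.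
Qed.

Hypothesis side_mono :
  forall i j : 'I_t, (i <= j)%N -> (#|Vside side i| <= #|Vside side j|)%N.

Lemma indep_num_cHyp : indep_num H = top.
Proof.
apply/eqP; rewrite eqn_leq; apply/andP; split.
  apply/bigmax_leqP => A indA; have [F facetF AF] := maxset_exists indA.
  apply: leq_trans (subset_leq_card AF) _.
  have [S [cardS ->]] := (facet_Ind_cHyp s_ge2 s_le_t side_surj F).1 facetF.
  rewrite card_union_sides /top (_ : t - s + 1 = t - (s - 1))%N; last lia.
  by apply: leq_sum_top => //; lia.
rewrite -card_top_sides; apply: leq_bigmax_cond.
by rewrite independent_union_sides // card_Top; lia.
Qed.

Lemma bot_le_transversal T : transversal H T -> (bot <= #|T|)%N.
Proof.
rewrite transversalE => indTC.
have : (#|~: T| <= top)%N by rewrite -indep_num_cHyp; exact: leq_bigmax_cond.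
by have := top_add_bot; have := cardsC T; rewrite card_ord; lia.
Qed.

Lemma transv_num_cHyp : transv_num H = bot.
Proof.
apply/eqP; rewrite eqn_leq; apply/andP; split.
  by rewrite -card_bot_sides; apply: geq_bigmin_cond; exact: transversal_bot_sides.
apply: (big_ind (fun k => bot <= k)%N) => [|a b ??|T /bot_le_transversal //].
  by rewrite -top_add_bot leq_addl.
by rewrite leq_min; apply/andP.
Qed.

Lemma card_bot_sides_min T : transversal H T -> (#|us (~: Top)| <= #|T|)%N.
Proof. by rewrite card_bot_sides; exact: bot_le_transversal. Qed.

Lemma ideal_height_cHyp (K : fieldType) : ideal_height (@edge_ideal K n H) bot.
Proof.
rewrite -card_bot_sides; apply: ideal_height_edge_ideal; first exact: transversal_bot_sides.
exact: card_bot_sides_min.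
Qed.

Lemma krull_dim_quot_cHyp (K : fieldType) : krull_dim_quot (@edge_ideal K n H) top.
Proof.
have -> : top = (n - #|us (~: Top)|)%N by rewrite card_bot_sides -top_add_bot addnK.
apply: krull_dim_quot_edge_ideal; first exact: transversal_bot_sides.
exact: card_bot_sides_min.
Qed.

End SortedSides.

Theorem proposition2p1 (K : fieldType) (n t s : nat) (side : 'I_n -> 'I_t)
  (Hs : (2 <= s)%N) (Hst : (s <= t)%N)
  (Hsurj : forall i : 'I_t, exists x : 'I_n, side x = i)
  (Hmono : forall i j : 'I_t, (i <= j)%N -> (#|Vside side i| <= #|Vside side j|)%N) :
  let H := cHyp s side in
  let V := Vside side in
  (* (a) *)
  (forall F : {set 'I_n}, facet_Ind H F <->
     exists S : {set 'I_t}, #|S| = (s - 1)%N /\ F = union_sides side S) /\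
  (* (b) *)
  (forall T : {set 'I_n}, min_transversal H T <->
     exists S : {set 'I_t}, #|S| = (t - s + 1)%N /\ T = union_sides side S) /\
  (* (c) *)
  indep_num H = (\sum_(i < t | (t - s + 1 <= i)%N) #|V i|)%N /\
  transv_num H = (\sum_(i < t | (i < t - s + 1)%N) #|V i|)%N /\
  (* (d) *)
  krull_dim_quot (@edge_ideal K n H) (\sum_(i < t | (t - s + 1 <= i)%N) #|V i|)%N /\
  ((\sum_(i < t | (t - s + 1 <= i)%N) #|V i|)%N%:Z = dim_Ind H + 1)%R /\
  ideal_height (@edge_ideal K n H) (\sum_(i < t | (i < t - s + 1)%N) #|V i|)%N /\
  (* (e) *)
  (forall m : nat, (1 <= m)%N -> (forall i : 'I_t, #|V i| = m) ->
     ideal_height (@edge_ideal K n H) (m * (t - s + 1))%N /\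
     krull_dim_quot (@edge_ideal K n H) (m * (s - 1))%N).
Proof.
move=> H V.
have dimR := krull_dim_quot_cHyp Hs Hst Hsurj Hmono K.
have htI := ideal_height_cHyp Hs Hst Hsurj Hmono K.
split; first exact: facet_Ind_cHyp.
split; first exact: min_transversal_cHyp.
split; first exact: indep_num_cHyp.
split; first exact: transv_num_cHyp.
split=> //; split; first by rewrite /dim_Ind indep_num_cHyp // subrK.
split=> // m _ Vm; have [top_m bot_m] := balanced_side_sums Hs Hst Vm.
by rewrite -top_m -bot_m.
Qed.
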